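(* If $S$ and $T$ are infinite monoids, then the direct product $S\times T$ is not $U(\mathrm{CF})$.
   Context: For a monoid $M$ generated by a finite set $A$, $\mathrm{WP}(M,A)=\{u\#v^{\mathrm{rev}} : u,v\in A^*,\ u=_M v\}$, where $\#\notin A$ and $v^{\mathrm{rev}}$ is the reversal of $v$. A monoid is $U(\mathrm{CF})$ if it is finitely generated and its word problem with respect to some (equivalently any) finite generating set is context-free. *)

From Stdlib Require Import List.
From mathcomp Require Import all_boot.
Set Implicit Arguments. Unset Strict Implicit. Unset Printing Implicit Defensive.

Record monoid := Monoid {
  mcarrier :> Type;
  mmul : mcarrier -> mcarrier -> mcarrier;
  mone : mcarrier;
  mmulA : forall x y z, mmul x (mmul y z) = mmul (mmul x y) z;
  mmul1 : forall x, mmul mone x = x;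
  mmulm1 : forall x, mmul x mone = x }.

Definition prod_monoid (S T : monoid) : monoid.
Proof.
refine (@Monoid (S * T)%type
  (fun p q => (mmul p.1 q.1, mmul p.2 q.2)) (mone S, mone T) _ _ _).
- by move=> [a b] [c d] [e f] /=; rewrite !mmulA.
- by move=> [a b] /=; rewrite !mmul1.
- by move=> [a b] /=; rewrite !mmulm1.
Defined.

Definition infinite_monoid (M : monoid) : Prop :=
  ~ exists s : list M, forall x : M, List.In x s.

Definition eval_word (M : monoid) (A : Type) (gen : A -> M) (w : seq A) : M :=
  foldr (fun a m => mmul (gen a) m) (mone M) w.

Definition generates (M : monoid) (A : Type) (gen : A -> M) : Prop :=
  forall x : M, exists w : seq A, eval_word gen w = x.

(* The word problem WP(M,A) = { u # rev v : u =_M v }, over the alphabet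
   option A, where None plays the role of the fresh symbol #. *)
Definition word_problem (M : monoid) (A : Type) (gen : A -> M)
  (w : seq (option A)) : Prop :=
  exists u v : seq A, eval_word gen u = eval_word gen v /\
    w = map Some u ++ None :: map Some (rev v).

Record cfg (Sigma : finType) := CFG {
  nonterm : finType;
  rules : seq (nonterm * seq (nonterm + Sigma));
  start : nonterm }.

Definition derive1 (Sigma : finType) (G : cfg Sigma)
  (u v : seq (nonterm G + Sigma)) : Prop :=
  exists (x y : seq (nonterm G + Sigma)) (X : nonterm G) rhs,
    (X, rhs) \in rules G /\ u = x ++ inl X :: y /\ v = x ++ rhs ++ y.

Inductive derives (Sigma : finType) (G : cfg Sigma) :
  seq (nonterm G + Sigma) -> seq (nonterm G + Sigma) -> Prop :=
| derives_refl u : @derives Sigma G u u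
| derives_step u v w : @derive1 Sigma G u v -> @derives Sigma G v w -> @derives Sigma G u w.

Definition cfg_lang (Sigma : finType) (G : cfg Sigma) (w : seq Sigma) : Prop :=
  @derives Sigma G [:: inl (start G)] (map inr w).

Definition context_free (Sigma : finType) (L : seq Sigma -> Prop) : Prop :=
  exists G : cfg Sigma, forall w, L w <-> cfg_lang G w.

Definition UCF (M : monoid) : Prop :=
  exists (A : finType) (gen : A -> M),
    injective gen /\ generates gen /\
    context_free (word_problem gen).

From Stdlib Require Import Classical IndefiniteDescription.
From mathcomp Require Import all_boot zify.
Set Implicit Arguments. Unset Strict Implicit. Unset Printing Implicit Defensive.

(* Suppose a grammar generates WP(S x T, A). Take words al, be of length n over A that are
   geodesic for the S- and for the T-component, replace each letter of al by a word
   representing only its S-component and each letter of be by one representing only its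
   T-component; writing al', be' for the results, al'be' # rev (be'al') is in the word
   problem. For n large, a pumping lemma in which the two pumped pieces must start and end at
   the same (block, offset) positions produces another member of the word problem, obtained
   by deleting whole letter blocks inside a window of fewer than n blocks. Such a window
   misses one of the two copies of al, so that copy survives, and geodesicity then forces the
   other copy to survive too; likewise for be. Hence nothing was deleted, a contradiction. *)

(** * Sequences *)

Lemma cat_eq_cat_cons (T : Type) (a b x y : seq T) e : a ++ b = x ++ e :: y ->
  (exists2 y1, a = x ++ e :: y1 & y = y1 ++ b) \/
  (exists2 x2, x = a ++ x2 & b = x2 ++ e :: y).
Proof.
elim: a x => [|c a IHa] x; first by right; exists x.
case: x => [|d x] [-> Eab]; first by left; exists a; rewrite // Eab.
by case: (IHa _ Eab) => [[y1 -> ->]|[x2 -> ->]]; [left; exists y1 | right; exists x2].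
Qed.

Lemma map_eq_cat (T1 T2 : Type) (f : T1 -> T2) s g1 g2 : map f s = g1 ++ g2 ->
  exists s1 s2, [/\ s = s1 ++ s2, g1 = map f s1 & g2 = map f s2].
Proof.
move=> Es; exists (take (size g1) s), (drop (size g1) s).
by rewrite cat_take_drop map_take map_drop Es take_size_cat ?drop_size_cat.
Qed.

Lemma drop_cat_leq (T : Type) n (s1 s2 : seq T) :
  n <= size s1 -> drop n (s1 ++ s2) = drop n s1 ++ s2.
Proof.
rewrite drop_cat; case: ltnP => // Hs1 Hn.
have -> : n = size s1 by apply/eqP; rewrite eqn_leq Hn.
by rewrite subnn drop0 drop_size.
Qed.

Lemma flatten_nth (T : Type) (ss : seq (seq T)) k :
  flatten ss = flatten (take k ss) ++ nth [::] ss k ++ flatten (drop k.+1 ss).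
Proof.
have [Hk|Hk] := ltnP k (size ss).
- by rewrite -{1}(cat_take_drop k ss) (drop_nth [::] Hk) flatten_cat.
- by rewrite take_oversize // nth_default // drop_oversize ?cats0 //; lia.
Qed.

Lemma pmap_rev (T1 T2 : Type) (f : T1 -> option T2) s : pmap f (rev s) = rev (pmap f s).
Proof.
elim: s => //= x s IHs; rewrite rev_cons -cats1 pmap_cat IHs /=.
by case: (f x) => [b|] /=; rewrite ?cats0 // rev_cons cats1.
Qed.

Lemma pmap_subseq (T1 T2 : eqType) (f : T1 -> option T2) s1 s2 :
  subseq s1 s2 -> subseq (pmap f s1) (pmap f s2).
Proof.
elim: s2 s1 => [|x s2 IHs2] [|y s1] //=; rewrite ?sub0seq //.
case: eqP => [-> /IHs2 | _ /IHs2 /= S12]; first by case: (f x) => //= b; rewrite eqxx.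
by case: (f x) => //= b; apply: subseq_trans S12 (subseq_cons _ _).
Qed.

Lemma pmap_subseq_nil (T1 T2 : eqType) (f : T1 -> option T2) s1 s2 :
  subseq s1 s2 -> pmap f s2 = [::] -> pmap f s1 = [::].
Proof. by move=> /(pmap_subseq f) S12 E; apply/eqP; rewrite -subseq0 -E. Qed.

Lemma subseq_cat_cons (T : eqType) (e : T) s l r : subseq s (l ++ e :: r) ->
  e \in s -> e \notin l -> e \notin r ->
  exists s1 s2, [/\ s = s1 ++ e :: s2, subseq s1 l & subseq s2 r].
Proof.
move=> /subseqP [m Hm ->]; rewrite -(cat_take_drop (size l) m) mask_cat; last first.
  by rewrite size_takel // Hm size_cat leq_addr.
have : size (drop (size l) m) = (size r).+1 by rewrite size_drop Hm size_cat /=; lia.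
case: (drop _ m) => [|[] m2] //= _; rewrite mem_cat => He el er.
- by exists (mask (take (size l) m) l), (mask m2 r); rewrite !mask_subseq.
- by case/orP: He => /mem_mask; rewrite ?(negbTE el) ?(negbTE er).
Qed.

Lemma cat_cons_inj (T : eqType) (e : T) l1 l2 m1 m2 :
  l1 ++ e :: l2 = m1 ++ e :: m2 -> e \notin l1 -> e \notin m1 -> l1 = m1 /\ l2 = m2.
Proof.
move=> E el em; have Es : size l1 = size m1.
  by have := congr1 (index e) E; rewrite !index_cat (negbTE el) (negbTE em) /= eqxx !addn0.
by move/eqP: E; rewrite eqseq_cat // => /andP [/eqP -> /eqP [->]].
Qed.

Lemma cat_pumped_eq (T : Type) (x y z y' q : seq T) :
  x ++ z ++ q = x ++ y ++ z ++ y' ++ q -> y ++ y' = [::].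
Proof.
by move=> /(congr1 size); rewrite !size_cat => E; apply/nilP; rewrite /nilp size_cat; lia.
Qed.

Lemma take_drop_double_cut (T : Type) (X : seq T) k1 k2 j3 j4 : k1 <= size X ->
  take (k1 + j3) (take k1 X ++ drop k2 X) ++ drop (k1 + j4) (take k1 X ++ drop k2 X) =
  take k1 X ++ take j3 (drop k2 X) ++ drop (k2 + j4) X.
Proof.
move=> Hk1; rewrite take_cat drop_cat size_takel // !ltnNge !leq_addr /= !addKn.
by rewrite drop_drop -catA addnC.
Qed.

Lemma subseq_take_drop_cut (T : eqType) (X : seq T) k1 k2 j3 j4 : k1 <= k2 -> j3 <= j4 ->
  subseq (take j3 (drop k2 X)) (drop k1 (take (k2 + j4) X)).
Proof.
move=> Hk12 Hj; rewrite -(take_takel _ Hj) take_drop addnC.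
apply: subseq_trans (take_subseq _ _) _.
by set s := take _ X; rewrite -(subnK Hk12) -drop_drop drop_subseq.
Qed.

Lemma map_f_In (T : eqType) (U : Type) (f : T -> U) x s : x \in s -> List.In (f x) (map f s).
Proof. by elim: s => //= y s IHs; rewrite in_cons => /predU1P [->|/IHs]; [left | right]. Qed.

Section Window.
Variables (T1 T2 : eqType) (g : T1 -> option T2) (X Dm : seq T1) (k1 k2 : nat).
Hypotheses (Hk12 : k1 <= k2) (HDm : subseq Dm (drop k1 (take k2 X))).

Lemma cat_window : take k1 X ++ drop k1 (take k2 X) ++ drop k2 X = X.
Proof. by rewrite catA -(take_takel _ Hk12) !cat_take_drop. Qed.

Lemma subseq_window : subseq (take k1 X ++ Dm ++ drop k2 X) X.
Proof. by rewrite -[in X in subseq _ X]cat_window; apply: cat_subseq => //; apply: cat_subseq. Qed.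

Lemma pmap_window : pmap g (drop k1 (take k2 X)) = [::] ->
  pmap g (take k1 X ++ Dm ++ drop k2 X) = pmap g X.
Proof.
by move=> mid0; rewrite -[in RHS]cat_window !pmap_cat mid0 (pmap_subseq_nil HDm mid0).
Qed.

Lemma pmap_window_drop m : m <= k1 -> pmap g (drop m X) = [::] ->
  pmap g (take k1 X ++ Dm ++ drop k2 X) = pmap g X.
Proof.
move=> Hm X0; apply/pmap_window/(pmap_subseq_nil _ X0).
rewrite -(subnK Hk12) -take_drop -(subnK Hm) -drop_drop.
exact: subseq_trans (take_subseq _ _) (drop_subseq _ _).
Qed.

Lemma pmap_window_take m : k2 <= m -> pmap g (take m X) = [::] ->
  pmap g (take k1 X ++ Dm ++ drop k2 X) = pmap g X.
Proof.
move=> Hm X0; apply/pmap_window/(pmap_subseq_nil _ X0).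
by rewrite -(take_takel _ Hm); exact: subseq_trans (drop_subseq _ _) (take_subseq _ _).
Qed.

End Window.

Lemma reshape_index_cons n sh p :
  reshape_index (n :: sh) p = if p < n then 0 else (reshape_index sh (p - n)).+1.
Proof. by rewrite /reshape_index /= subn_eq0; case: ltnP => // Hnp; rewrite subSn. Qed.

Lemma reshape_offset_cons n sh p :
  reshape_offset (n :: sh) p = if p < n then p else reshape_offset sh (p - n).
Proof.
rewrite /reshape_offset reshape_index_cons; case: ltnP => /= Hnp; first exact: subn0.
by rewrite subnDA.
Qed.

Lemma reshape_index_cat sh1 sh2 p :
  reshape_index (sh1 ++ sh2) (sumn sh1 + p) = size sh1 + reshape_index sh2 p.
Proof.
elim: sh1 => //= n sh1 IHsh1; rewrite reshape_index_cons ltnNge -addnA leq_addr /=.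
by rewrite addKn IHsh1.
Qed.

Lemma reshape_offset_cat sh1 sh2 p :
  reshape_offset (sh1 ++ sh2) (sumn sh1 + p) = reshape_offset sh2 p.
Proof.
elim: sh1 => //= n sh1 IHsh1; rewrite reshape_offset_cons ltnNge -addnA leq_addr /=.
by rewrite addKn IHsh1.
Qed.

Lemma reshape_index_leq sh p : reshape_index sh p <= size sh.
Proof. by rewrite -(size_scanl subn p.+1); apply: find_size. Qed.

Lemma reshape_offset_leq sh p :
  p <= sumn sh -> reshape_offset sh p <= nth 0 sh (reshape_index sh p).
Proof.
elim: sh p => [|n sh IHsh] p /=; first by rewrite leqn0 => /eqP ->.
rewrite reshape_index_cons reshape_offset_cons; case: ltnP => [/ltnW //|Hnp Hp].
by apply: IHsh; lia.
Qed.

Lemma reshape_index_mono sh : {homo reshape_index sh : p1 p2 / p1 <= p2}.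
Proof. by move=> p1 p2; rewrite (reshape_leq sh) => /orP [/ltnW|/andP [/eqP ->]]. Qed.

Lemma reshape_index_addn sh p t :
  0 \notin sh -> reshape_index sh (p + t) <= reshape_index sh p + t.
Proof.
elim: sh p t => [|n sh IHsh] p t //=; rewrite in_cons negb_or => /andP [n_gt0 sh0].
have IH0 q : reshape_index sh q <= q.
  have := IHsh 0 q sh0; case: sh {IHsh} sh0 => //= m sh'.
  by rewrite in_cons negb_or eq_sym -lt0n [reshape_index _ 0]reshape_index_cons => /andP [-> _].
rewrite !reshape_index_cons; have [//|Hpt] := ltnP (p + t) n.
have [Hp|Hp] := ltnP p n; first by have := IH0 (p + t - n); lia.
by rewrite (_ : p + t - n = p - n + t); [have := IHsh (p - n) t sh0 | ]; lia.
Qed.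

(** * Derivations *)

Section Derivations.
Variables (Sigma : finType) (G : cfg Sigma).
Local Notation sym := (nonterm G + Sigma)%type.

Fixpoint derives_in (n : nat) (u v : seq sym) : Prop :=
  if n is n'.+1 then exists2 u', derive1 u u' & derives_in n' u' v else u = v.

Lemma derivesP u v : derives u v <-> exists n, derives_in n u v.
Proof.
split; first by elim=> [w|x y w Dxy _ [n Dyw]]; [exists 0 | exists n.+1; exists y].
case=> n; elim: n u => [u /= ->|n IHn u [u' Du Du']]; first exact: derives_refl.
exact: derives_step Du (IHn _ Du').
Qed.

Lemma derives_in_ctx n p s u v :
  derives_in n u v -> derives_in n (p ++ u ++ s) (p ++ v ++ s).
Proof.
elim: n u => [u /= -> //|n IHn u [u' [x [y [X [rhs [HX [-> ->]]]]]] Du']].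
exists (p ++ (x ++ rhs ++ y) ++ s); last exact: IHn.
by exists (p ++ x), (y ++ s), X, rhs; rewrite -!catA.
Qed.

Lemma derives_in_trans n1 n2 u v w :
  derives_in n1 u v -> derives_in n2 v w -> derives_in (n1 + n2) u w.
Proof.
by elim: n1 u => [u /= -> //|n IHn u [u' Du Du'] Dvw]; exists u'; last exact: IHn.
Qed.

Lemma derives_in_cat n1 n2 a1 a2 b1 b2 : derives_in n1 a1 b1 ->
  derives_in n2 a2 b2 -> derives_in (n1 + n2) (a1 ++ a2) (b1 ++ b2).
Proof.
move=> D1 D2; apply: (derives_in_trans (v := b1 ++ a2)).
- exact: (derives_in_ctx [::] a2 D1).
- by have := derives_in_ctx b1 [::] D2; rewrite !cats0.
Qed.

Lemma derives_in_catP n a b g : derives_in n (a ++ b) g -> exists n1 n2 g1 g2,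
  [/\ n = n1 + n2, g = g1 ++ g2, derives_in n1 a g1 & derives_in n2 b g2].
Proof.
elim: n a b => [|n IHn] a b /=; first by move=> <-; exists 0, 0, a, b.
case=> _ [x [y [X [rhs [HX [Eab ->]]]]]] D.
case: (cat_eq_cat_cons Eab) => [[y1 Ea Ey]|[x2 Ex Eb]]; subst.
- have /IHn [n1 [n2 [g1 [g2 [-> -> D1 D2]]]]] : derives_in n ((x ++ rhs ++ y1) ++ b) g.
    by rewrite -!catA.
  exists n1.+1, n2, g1, g2; split=> //; exists (x ++ rhs ++ y1) => //.
  by exists x, y1, X, rhs.
- have /IHn [n1 [n2 [g1 [g2 [-> -> D1 D2]]]]] : derives_in n (a ++ x2 ++ rhs ++ y) g.
    by rewrite catA.
  exists n1, n2.+1, g1, g2; split; rewrite ?addnS //; exists (x2 ++ rhs ++ y) => //.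
  by exists x2, y, X, rhs.
Qed.

Lemma derives_in_terminal n w g : derives_in n (map inr w) g -> n = 0 /\ g = map inr w.
Proof.
case: n => [/= -> //|n /= [_ [x [y [X [rhs [_ [Ew _]]]]]] _]].
have : inl X \in map inr w by rewrite Ew mem_cat mem_head orbT.
by case/mapP.
Qed.

Lemma derives_in_nonterm n X w : derives_in n [:: inl X] (map inr w) ->
  exists m rhs, [/\ n = m.+1, (X, rhs) \in rules G & derives_in m rhs (map inr w)].
Proof.
case: n => [|m /= [_ [[|c x] [y [X' [rhs [HX' [/= EX ->]]]]]] D]]; first by case: w.
- by case: EX => EX Ey; subst; rewrite cats0 in D; exists m, rhs.
- by case: EX => _; case: x D.
Qed.

Lemma derives_in_rule m X rhs g :
  (X, rhs) \in rules G -> derives_in m rhs g -> derives_in m.+1 [:: inl X] g.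
Proof. by move=> HX D; exists rhs => //; exists [::], [::], X, rhs; rewrite cats0. Qed.

End Derivations.

(** * A pumping lemma with coloured cut points *)

Section ColouredPumping.
Variables (Sigma : finType) (G : cfg Sigma) (F : finType).
Local Notation sym := (nonterm G + Sigma)%type.
Local Notation label := (nonterm G * F * F)%type.

Definition rhs_bound := (\max_(r <- rules G) size r.2).+1.
Definition pumping_constant := rhs_bound ^ #|{: label}|.+1.

Lemma size_rhs_le X rhs : (X, rhs) \in rules G -> size rhs <= rhs_bound.
Proof.
by move=> HX; apply: leqW; apply: (@leq_bigmax_seq _ _ xpredT (fun r => size r.2) (X, rhs)).
Qed.

Lemma leq_rhs_bound_pow k1 k2 : k1 <= k2 -> rhs_bound ^ k1 <= rhs_bound ^ k2.
Proof. exact: leq_pexp2l. Qed.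

Variable col : nat -> F.

(* For a derivation of [w] from [rhs] in [m] steps, [w] sitting at position [a] of the whole
   word: [pumpable] gives w = x y z y' q such that x z q is derivable in fewer steps and the
   cuts around y and around y' have equal colours; the label (Z, c, c') of an occurrence of
   the nonterminal Z records the colours at both ends of its yield. *)
Variant pumpable (rhs : seq sym) (a : nat) (w : seq Sigma) (m : nat) : Prop :=
  Pumpable Z x y z y' q n1 n3 of w = x ++ y ++ z ++ y' ++ q & n1 + n3 < m
  & size (y ++ z ++ y') <= pumping_constant
  & col (a + size x) = col (a + size (x ++ y))
  & col (a + size (x ++ y ++ z)) = col (a + size (x ++ y ++ z ++ y'))
  & derives_in n1 rhs (map inr x ++ inl Z :: map inr q)
  & derives_in n3 [:: inl Z] (map inr z).

Variant realizes (rhs : seq sym) (a : nat) (w : seq Sigma) (m : nat) (l : label) : Prop :=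
  Realizes Z x z q n1 n3 of l = (Z, col (a + size x), col (a + size (x ++ z)))
  & w = x ++ z ++ q & m = n1 + n3
  & derives_in n1 rhs (map inr x ++ inl Z :: map inr q)
  & derives_in n3 [:: inl Z] (map inr z).

Definition label_bounded rhs a w m := exists2 L : {set label},
  size w <= size rhs * rhs_bound ^ #|L| & {in L, forall l, realizes rhs a w m l}.

Definition pumpable_or_label_bounded rhs a w m :=
  pumpable rhs a w m \/ label_bounded rhs a w m.

Section Concatenation.
Variables (s r : seq sym) (a : nat) (w1 w2 : seq Sigma) (m1 m2 : nat).
Hypotheses (D1 : derives_in m1 s (map inr w1)) (D2 : derives_in m2 r (map inr w2)).

Lemma pumpable_catr : pumpable s a w1 m1 -> pumpable (s ++ r) a (w1 ++ w2) (m1 + m2).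
Proof.
case=> Z x y z y' q n1 n3 -> Hn Hs C1 C2 Dx Dz.
apply: (Pumpable (q := q ++ w2) (n1 := n1 + m2)) Hs C1 C2 _ Dz; rewrite ?catA //; first lia.
by have := derives_in_cat Dx D2; rewrite map_cat -catA.
Qed.

Lemma pumpable_catl : pumpable r (a + size w1) w2 m2 -> pumpable (s ++ r) a (w1 ++ w2) (m1 + m2).
Proof.
case=> Z x y z y' q n1 n3 -> Hn Hs C1 C2 Dx Dz.
apply: (Pumpable (x := w1 ++ x) (n1 := m1 + n1)) Hs _ _ _ Dz; rewrite ?catA //; first lia.
- by move: C1; rewrite !size_cat !addnA.
- by move: C2; rewrite !size_cat !addnA.
- by have := derives_in_cat D1 Dx; rewrite map_cat -catA.
Qed.

Lemma realizes_catr l : realizes s a w1 m1 l -> realizes (s ++ r) a (w1 ++ w2) (m1 + m2) l.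
Proof.
case=> Z x z q n1 n3 El -> -> Dx Dz.
apply: (Realizes (q := q ++ w2) (n1 := n1 + m2)) El _ _ _ Dz; rewrite ?catA //; first lia.
by have := derives_in_cat Dx D2; rewrite map_cat -catA.
Qed.

Lemma realizes_catl l :
  realizes r (a + size w1) w2 m2 l -> realizes (s ++ r) a (w1 ++ w2) (m1 + m2) l.
Proof.
case=> Z x z q n1 n3 -> -> -> Dx Dz.
apply: (Realizes (x := w1 ++ x) (n1 := m1 + n1)) _ _ _ _ Dz; rewrite ?catA ?addnA //.
- by rewrite !size_cat !addnA.
- by have := derives_in_cat D1 Dx; rewrite map_cat -catA.
Qed.

Lemma label_bounded_cat : label_bounded s a w1 m1 -> label_bounded r (a + size w1) w2 m2 ->
  label_bounded (s ++ r) a (w1 ++ w2) (m1 + m2).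
Proof.
move=> [L1 S1 R1] [L2 S2 R2]; exists (L1 :|: L2).
- rewrite !size_cat mulnDl; apply: leq_add.
  + by apply: leq_trans S1 (leq_mul (leqnn _) (leq_rhs_bound_pow (subset_leq_card (subsetUl _ _)))).
  + by apply: leq_trans S2 (leq_mul (leqnn _) (leq_rhs_bound_pow (subset_leq_card (subsetUr _ _)))).
- move=> l; rewrite in_setU => /orP [/R1 | /R2]; [exact: realizes_catr | exact: realizes_catl].
Qed.

Lemma pumpable_or_label_bounded_cat :
  pumpable_or_label_bounded s a w1 m1 -> pumpable_or_label_bounded r (a + size w1) w2 m2 ->
  pumpable_or_label_bounded (s ++ r) a (w1 ++ w2) (m1 + m2).
Proof.
case=> [/pumpable_catr|B1]; first by left.
case=> [/pumpable_catl|B2]; first by left.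
by right; exact: label_bounded_cat.
Qed.

End Concatenation.

Section Rule.
Variables (X : nonterm G) (rhs : seq sym) (a : nat) (w : seq Sigma) (m : nat).
Hypothesis HX : (X, rhs) \in rules G.

Lemma pumpable_rule : pumpable rhs a w m -> pumpable [:: inl X] a w m.+1.
Proof.
case=> Z x y z y' q n1 n3 Ew Hn Hs C1 C2 Dx Dz.
by apply: (Pumpable (n1 := n1.+1)) Ew _ Hs C1 C2 (derives_in_rule HX Dx) Dz.
Qed.

Lemma realizes_rule l : realizes rhs a w m l -> realizes [:: inl X] a w m.+1 l.
Proof.
case=> Z x z q n1 n3 El Ew -> Dx Dz.
exact: (Realizes (n1 := n1.+1)) El Ew _ (derives_in_rule HX Dx) Dz.
Qed.

(* Either the label of the new root already occurs below it, and the root can be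
   pumped down to that occurrence, or it is a new label paying for the growth of w. *)
Lemma pumpable_or_label_bounded_rule : derives_in m rhs (map inr w) ->
  pumpable_or_label_bounded rhs a w m -> pumpable_or_label_bounded [:: inl X] a w m.+1.
Proof.
move=> D [/pumpable_rule|[L SL RL]]; first by left.
have Sw : size w <= rhs_bound ^ #|L|.+1.
  by apply: leq_trans SL _; rewrite expnS leq_mul2r (size_rhs_le HX) orbT.
set lX := (X, col a, col (a + size w)).
have [/RL [Z x z q n1 n3 [EZ Ca Cw] Ew Em _ Dz] | lX_new] := boolP (lX \in L).
- left; subst Z.
  apply: (Pumpable (x := [::]) (y := x) (y' := q) (q := [::]) (n1 := 0)) Dz => //=.
  + by rewrite cats0.
  + lia.
  + rewrite -Ew; apply: leq_trans Sw (leq_rhs_bound_pow _); exact: max_card.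
  + by rewrite addn0.
  + by rewrite -Ew.
- right; exists (lX |: L); first by rewrite cardsU1 lX_new mul1n.
  move=> l; rewrite in_setU1 => /predU1P [-> | /RL /realizes_rule //].
  apply: (Realizes (x := [::]) (q := [::]) (n1 := 0)); rewrite ?addn0 ?cats0 //.
  exact: derives_in_rule HX D.
Qed.

End Rule.

Lemma label_bounded_small rhs a w m : size w <= size rhs -> label_bounded rhs a w m.
Proof. by move=> Sw; exists set0; rewrite ?cards0 ?muln1 // => l; rewrite in_set0. Qed.

Lemma derivation_pumpable_or_label_bounded m rhs a w :
  derives_in m rhs (map inr w) -> pumpable_or_label_bounded rhs a w m.
Proof.
elim/ltn_ind: m rhs a w => m IHm rhs; elim: rhs m IHm => [|s r IHr] m IHm a w.
  move=> /(derives_in_terminal (w := [::])) [_ Ew].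
  by right; apply: label_bounded_small; case: w Ew.
case/(derives_in_catP (a := [:: s])) => [m1 [m2 [g1 [g2 [Em Eg D1 D2]]]]].
have [w1 [w2 [Ew E1 E2]]] := map_eq_cat Eg; subst.
have O1 : pumpable_or_label_bounded [:: s] a w1 m1.
  case: s D1 => [X|t] D1.
  - have [k [rhs' [Ek HX Dk]]] := derives_in_nonterm D1; subst m1.
    apply: pumpable_or_label_bounded_rule HX Dk (IHm k _ _ _ _ Dk); lia.
  - have [_ Ew1] := derives_in_terminal (w := [:: t]) D1.
    by right; apply: label_bounded_small; case: w1 Ew1 {D1 Eg} => [|? []].
have O2 : pumpable_or_label_bounded r (a + size w1) w2 m2.
  by apply: IHr D2 => k Hk; apply: IHm; lia.
exact: pumpable_or_label_bounded_cat D1 D2 O1 O2.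
Qed.

Theorem coloured_pumping W : cfg_lang G W -> pumping_constant < size W ->
  exists x y z y' q, [/\ W = x ++ y ++ z ++ y' ++ q, y ++ y' != [::],
    size (y ++ z ++ y') <= pumping_constant, col (size x) = col (size (x ++ y))
    & col (size (x ++ y ++ z)) = col (size (x ++ y ++ z ++ y'))]
    /\ cfg_lang G (x ++ z ++ q).
Proof.
rewrite /cfg_lang derivesP => -[n D].
elim/ltn_ind: n W D => n IHn W D HW.
have [[Z x y z y' q n1 n3 EW Hn Hs C1 C2 Dx Dz] | [L SL _]] :=
  derivation_pumpable_or_label_bounded 0 D; last first.
  have : rhs_bound ^ #|L| <= pumping_constant.
    exact/leq_rhs_bound_pow/leqW/max_card.
  by rewrite mul1n in SL; lia.
have Dxzq : derives_in (n1 + n3) [:: inl (start G)] (map inr (x ++ z ++ q)).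
  apply: derives_in_trans Dx _.
  by have := derives_in_ctx (map inr x) (map inr q) Dz; rewrite !map_cat.
have [/nilP Eyy | Hyy] := eqVneq (y ++ y') [::].
- move: Eyy; rewrite cat_nilp => /andP [/nilP Ey /nilP Ey'].
  by subst y y' W; apply: IHn Hn _ Dxzq _.
- rewrite !add0n in C1 C2; exists x, y, z, y', q; split=> //.
  by apply/derivesP; exists (n1 + n3).
Qed.

End ColouredPumping.

(** * Words cut into blocks *)

Section Blocks.
Variables (D : eqType) (E : Type) (psi : D -> seq E).

Definition blocks (X : seq D) := flatten (map psi X).
Definition block_index X p := reshape_index (shape (map psi X)) p.
Definition block_offset X p := reshape_offset (shape (map psi X)) p.

(* Colour [(Some d, o)]: offset [o] inside a block of type [d]; [(None, 0)]: the end. *)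
Definition block_colour X p : option D * nat := (onth X (block_index X p), block_offset X p).

Lemma blocks_cons d X : blocks (d :: X) = psi d ++ blocks X.
Proof. by []. Qed.

Lemma blocks_cat X1 X2 : blocks (X1 ++ X2) = blocks X1 ++ blocks X2.
Proof. by rewrite /blocks map_cat flatten_cat. Qed.

Lemma size_blocks X : size (blocks X) = sumn (shape (map psi X)).
Proof. exact: size_flatten. Qed.

Lemma block_indexK X p : size (blocks (take (block_index X p) X)) + block_offset X p = p.
Proof.
by rewrite size_blocks map_take -[RHS](reshape_indexK (shape (map psi X))) /shape map_take.
Qed.

Lemma block_index_leq X p : block_index X p <= size X.
Proof. by have := reshape_index_leq (shape (map psi X)) p; rewrite !size_map. Qed.

Lemma block_index_cat X1 X2 p :
  block_index (X1 ++ X2) (size (blocks X1) + p) = size X1 + block_index X2 p.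
Proof. by rewrite /block_index size_blocks map_cat /shape map_cat reshape_index_cat !size_map. Qed.

Lemma block_colour_cat X1 X2 p :
  block_colour (X1 ++ X2) (size (blocks X1) + p) = block_colour X2 p.
Proof.
rewrite /block_colour block_index_cat onth_cat ltnNge leq_addr addKn.
by rewrite /block_offset size_blocks map_cat /shape map_cat reshape_offset_cat.
Qed.

Lemma blocks_nth X k :
  blocks X = blocks (take k X) ++ nth [::] (map psi X) k ++ blocks (drop k.+1 X).
Proof. by rewrite /blocks map_take map_drop -flatten_nth. Qed.

Lemma block_offset_leq X p : p <= size (blocks X) ->
  block_offset X p <= size (nth [::] (map psi X) (block_index X p)).
Proof. by move=> Hp; rewrite -nth_shape; apply: reshape_offset_leq; rewrite -size_blocks. Qed.

Lemma block_offset_lt X p m : p <= size (blocks X) -> 0 < m -> (forall d, size (psi d) < m) ->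
  block_offset X p < m.
Proof.
move=> /block_offset_leq Hp m_gt0 Hm; apply: leq_ltn_trans Hp _.
have [Hr|Hr] := ltnP (block_index X p) (size (map psi X)); last by rewrite nth_default.
have : all (fun s => size s < m) (map psi X) by rewrite all_map; apply/allP => d _ /=.
by move/(all_nthP [::]); apply.
Qed.

Lemma size_blocks_geq X : {in X, forall d, 0 < size (psi d)} -> size X <= size (blocks X).
Proof.
elim: X => //= d X IHX ne; rewrite blocks_cons size_cat.
by rewrite -add1n leq_add ?ne ?mem_head // IHX // => e Xe; apply: ne; rewrite in_cons Xe orbT.
Qed.

Lemma blocks_split X p : p <= size (blocks X) ->
  take p (blocks X) = blocks (take (block_index X p) X) ++
    take (block_offset X p) (nth [::] (map psi X) (block_index X p)) /\
  drop p (blocks X) = drop (block_offset X p) (nth [::] (map psi X) (block_index X p)) ++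
    blocks (drop (block_index X p).+1 X).
Proof.
move=> /block_offset_leq Hc.
have Ep := block_indexK X p.
set r := block_index X p in Hc Ep *; set c := block_offset X p in Hc Ep *.
rewrite -{}Ep (blocks_nth X r).
split; first by rewrite takeD take_size_cat // drop_size_cat // takel_cat.
by rewrite addnC -drop_drop drop_size_cat // drop_cat_leq.
Qed.

Lemma blocks_glue X p1 p2 : p1 <= size (blocks X) -> p2 <= size (blocks X) ->
  block_colour X p1 = block_colour X p2 ->
  take p1 (blocks X) ++ drop p2 (blocks X) =
    blocks (take (block_index X p1) X ++ drop (block_index X p2) X).
Proof.
move=> /blocks_split [-> _] /blocks_split [_ ->] [].
set r1 := block_index X p1; set r2 := block_index X p2; move=> Er ->.
case Ed: (onth X r2) Er => [d|] Er.
- have Hr1 : r1 < size X by rewrite -onthTE Er.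
  have Hr2 : r2 < size X by rewrite -onthTE Ed.
  rewrite (drop_nth d Hr2) !(nth_map d) // (onth_nth d _ _ _ Er) (onth_nth d _ _ _ Ed).
  by rewrite -catA (catA (take _ (psi d))) cat_take_drop blocks_cat.
- have Hr1 : size X <= r1 by rewrite -onthNE Er.
  have Hr2 : size X <= r2 by rewrite -onthNE Ed.
  rewrite take_oversize // !drop_oversize // ?nth_default ?size_map //; last lia.
  by rewrite /blocks /= !cats0.
Qed.

Lemma block_colour_drop X k t :
  block_colour X (size (blocks (take k X)) + t) = block_colour (drop k X) t.
Proof. by rewrite -{1}(cat_take_drop k X) block_colour_cat. Qed.

Lemma block_index_drop X k t : k <= size X ->
  block_index X (size (blocks (take k X)) + t) = k + block_index (drop k X) t.
Proof. by move=> Hk; rewrite -{1}(cat_take_drop k X) block_index_cat size_takel. Qed.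

Lemma block_index_mono X : {homo block_index X : p1 p2 / p1 <= p2}.
Proof. exact: reshape_index_mono. Qed.

Lemma block_index_addn X p t :
  {in X, forall d, 0 < size (psi d)} -> block_index X (p + t) <= block_index X p + t.
Proof.
move=> ne; apply: reshape_index_addn; rewrite /shape -map_comp.
by apply/mapP => -[d Xd /= E0]; have := ne d Xd; rewrite -E0.
Qed.

Lemma blocks_window X x y z y' q :
  {in X, forall d, 0 < size (psi d)} -> blocks X = x ++ y ++ z ++ y' ++ q ->
  block_colour X (size x) = block_colour X (size (x ++ y)) ->
  block_colour X (size (x ++ y ++ z)) = block_colour X (size (x ++ y ++ z ++ y')) ->
  exists k1 k2 Dm, [/\ x ++ z ++ q = blocks (take k1 X ++ Dm ++ drop k2 X),
    subseq Dm (drop k1 (take k2 X)), k1 <= k2, k2 <= size X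
    & k2 <= k1 + size (y ++ z ++ y')].
Proof.
move=> ne EW C1 C2.
have leW (W u v : seq E) : W = u ++ v -> size u <= size W.
  by move=> ->; rewrite size_cat leq_addr.
set k1 := block_index X (size x); set k2 := block_index X (size (x ++ y)).
set c := block_offset X (size x).
have Hk1 : k1 <= size X := block_index_leq X _.
have Hk12 : k1 <= k2 by apply: block_index_mono; rewrite size_cat leq_addr.
have Px : size x = size (blocks (take k1 X)) + c by rewrite block_indexK.
have Pxy : size (x ++ y) = size (blocks (take k2 X)) + c.
  by case: C1 => _ Ec; rewrite /c Ec block_indexK.
set X2 := take k1 X ++ drop k2 X.
have EW2 : blocks X2 = (x ++ z) ++ y' ++ q.
  rewrite -blocks_glue ?(leW _ x (y ++ z ++ y' ++ q)) ?(leW _ (x ++ y) (z ++ y' ++ q)) //.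
  - by rewrite EW take_size_cat // catA drop_size_cat // -!catA.
  - by rewrite EW catA.
have shift t : block_colour X2 (size x + t) = block_colour X (size (x ++ y) + t).
  by rewrite Px Pxy -!addnA block_colour_cat block_colour_drop.
pose j t := block_index (drop k2 X) (c + t).
have index2 t : block_index X2 (size x + t) = k1 + j t.
  by rewrite Px -addnA block_index_cat size_takel.
have index1 t : block_index X (size (x ++ y) + t) = k2 + j t.
  by rewrite Pxy -addnA block_index_drop // block_index_leq.
have Ez : size (x ++ y ++ z) = size (x ++ y) + size z by rewrite catA size_cat.
have Ey' : size (x ++ y ++ z ++ y') = size (x ++ y) + (size z + size y').
  by rewrite !catA !size_cat addnA.
have C2' : block_colour X2 (size (x ++ z)) = block_colour X2 (size ((x ++ z) ++ y')).
  by rewrite !size_cat -addnA !shift -Ez -Ey'.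
have := blocks_glue (leW _ _ _ EW2) (leW _ _ _ (etrans EW2 (catA _ _ _))) C2'.
rewrite EW2 take_size_cat // (catA (x ++ z)) drop_size_cat // !size_cat -addnA !index2.
rewrite take_drop_double_cut // => EX.
exists k1, (k2 + j (size z + size y')), (take (j (size z)) (drop k2 X)); split=> //.
- by rewrite -EX catA.
- by apply: subseq_take_drop_cut => //; apply: block_index_mono; lia.
- exact: leq_trans Hk12 (leq_addr _ _).
- by rewrite -index1 block_index_leq.
- rewrite -index1 -Ey'; have := block_index_addn (size x) (size (y ++ z ++ y')) ne.
  by rewrite -/k1 -!size_cat.
Qed.

End Blocks.

(** * Geodesic words *)

Section Geodesics.
Variables (A : finType) (M : monoid) (gen : A -> M).

Lemma eval_word_cat u v : eval_word gen (u ++ v) = mmul (eval_word gen u) (eval_word gen v).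
Proof. by elim: u => [|a u IHu] /=; rewrite ?mmul1 // IHu mmulA. Qed.

Definition geodesic (w : seq A) :=
  forall w', eval_word gen w' = eval_word gen w -> size w <= size w'.

Lemma geodesic_exists w : exists2 g, eval_word gen g = eval_word gen w & geodesic g.
Proof.
have [k] := ubnP (size w); elim: k w => [|k IHk] w // Hw.
have [Gw|] := classic (geodesic w); first by exists w.
move=> /not_all_ex_not [w' Hw']; have [Ew' /negP] := imply_to_and _ _ Hw'.
rewrite -ltnNge {Hw'} => Hw'.
have [g Eg Gg] := IHk w' (leq_trans Hw' Hw).
by exists g; rewrite // Eg.
Qed.

Lemma geodesic_prefix u v : geodesic (u ++ v) -> geodesic u.
Proof.
move=> G w Ew; have := G (w ++ v); rewrite !eval_word_cat Ew !size_cat leq_add2r.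
exact.
Qed.

Lemma geodesic_subseq g w : geodesic g -> subseq w g -> eval_word gen w = eval_word gen g -> w = g.
Proof.
move=> G Swg /G Hgw; apply/eqP.
by rewrite -(size_subseq_leqif Swg).2 eqn_leq Hgw size_subseq.
Qed.

Lemma geodesic_subseq_pair g l r : geodesic g -> subseq l g -> subseq r g ->
  eval_word gen l = eval_word gen r -> l = g \/ r = g -> l = g /\ r = g.
Proof.
move=> G Sl Sr Elr [El|Er]; split=> //.
- by apply: geodesic_subseq G Sr _; rewrite -Elr El.
- by apply: geodesic_subseq G Sl _; rewrite Elr Er.
Qed.

Lemma geodesic_gen_neq1 g a : geodesic g -> a \in g -> gen a <> mone M.
Proof.
move=> G Ha Ea; case/splitPr: Ha G => g1 g2 G; have := G (g1 ++ g2).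
rewrite !eval_word_cat /= Ea mmul1 !size_cat /= => /(_ erefl); lia.
Qed.

Fixpoint words_upto k : seq (seq A) :=
  if k is k'.+1 then [::] :: [seq a :: w | a <- enum A, w <- words_upto k'] else [:: [::]].

Lemma mem_words_upto k w : size w <= k -> w \in words_upto k.
Proof.
elim: k w => [|k IHk] [|a w] //= Hw; rewrite in_cons /=.
by apply/allpairsP; exists (a, w); rewrite mem_enum IHk.
Qed.

Lemma exists_geodesic_of_size n : generates gen -> infinite_monoid M ->
  exists g, size g = n /\ geodesic g.
Proof.
move=> Hgen Hinf.
have [s Hs] : exists s, forall w, eval_word gen w = s -> n <= size w.
  apply: NNPP => Hn; apply: Hinf; exists (map (eval_word gen) (words_upto n)) => s.
  have /not_all_ex_not [w Hw] := not_ex_all_not _ _ Hn s.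
  have [<- /negP] := imply_to_and _ _ Hw; rewrite -ltnNge => /ltnW {}Hw.
  exact/map_f_In/mem_words_upto.
have [w Ew] := Hgen s; have [g Eg Gg] := geodesic_exists w.
have Hng : n <= size g by apply: Hs; rewrite Eg.
exists (take n g); split; first by rewrite size_takel.
by apply: (@geodesic_prefix _ (drop n g)); rewrite cat_take_drop.
Qed.

End Geodesics.

(** * The witness *)

Lemma mem_None_word_problem (M : monoid) (A : eqType) (gen : A -> M) w :
  word_problem gen w -> None \in w.
Proof. by case=> u [v [_ ->]]; rewrite mem_cat mem_head orbT. Qed.

Section ProductWitness.
Variables (S T : monoid) (A : finType) (gen : A -> prod_monoid S T).

Definition genS (a : A) : S := (gen a).1.
Definition genT (a : A) : T := (gen a).2.

Lemma eval_word_prod w :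
  eval_word gen w = ((eval_word genS w, eval_word genT w) : prod_monoid S T).
Proof. by elim: w => //= a w ->. Qed.

Lemma generates_genS : generates gen -> generates genS.
Proof.
move=> Hgen s; have [w Ew] := Hgen ((s, mone T) : prod_monoid S T).
by exists w; rewrite -[s]/(((s, mone T) : prod_monoid S T).1) -Ew eval_word_prod.
Qed.

Lemma generates_genT : generates gen -> generates genT.
Proof.
move=> Hgen t; have [w Ew] := Hgen ((mone S, t) : prod_monoid S T).
by exists w; rewrite -[t]/(((mone S, t) : prod_monoid S T).2) -Ew eval_word_prod.
Qed.

Variables (phS phT : A -> seq A).
Hypothesis phSE : forall a, eval_word gen (phS a) = ((genS a, mone T) : prod_monoid S T).
Hypothesis phTE : forall a, eval_word gen (phT a) = ((mone S, genT a) : prod_monoid S T).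

(* A block [Some ((s, t), a)] stands for the letter [a] of the [S]-part ([t = false]) or
   of the [T]-part ([t = true]) of a word, written left of [#] ([s = false]) or reversed
   right of it ([s = true]); [None] stands for [#]. *)
Local Notation block := (option (bool * bool * A)).

Definition component_word (t : bool) (a : A) := if t then phT a else phS a.

Definition block_word (d : block) : seq (option A) :=
  if d is Some (st, a) then
    map Some (if st.1 then rev (component_word st.2 a) else component_word st.2 a)
  else [:: None].

Definition value_word (Y : seq block) : seq A :=
  flatten [seq if d is Some (st, a) then component_word st.2 a else [::] | d <- Y].

Definition pick (st : bool * bool) (d : block) : option A :=
  if d is Some (st', a) then (if st' == st then Some a else None) else None.

Definition on_side (s : bool) (d : block) := if d is Some (st, _) then st.1 == s else false.

Definition tagged st (l : seq A) : seq block := [seq Some (st, a) | a <- l].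

Lemma eval_value_word s Y : all (on_side s) Y ->
  eval_word gen (value_word Y) = ((eval_word genS (pmap (pick (s, false)) Y),
                                   eval_word genT (pmap (pick (s, true)) Y)) : prod_monoid S T).
Proof.
elim: Y => [|[[[s' t] a]|] Y IHY] //= /andP [/eqP -> {s'} /IHY IH].
rewrite /value_word /= -/(value_word Y) eval_word_cat IH.
by case: s t IH => [] [] IH; rewrite ?phSE ?phTE /= ?mmul1.
Qed.

Lemma blocks_left Y : all (on_side false) Y -> blocks block_word Y = map Some (value_word Y).
Proof.
elim: Y => [|[[[[] t] a]|] Y IHY] //= /IHY IH.
by rewrite blocks_cons IH /value_word /= map_cat.
Qed.

Lemma blocks_right Y :
  all (on_side true) Y -> blocks block_word Y = map Some (rev (value_word (rev Y))).
Proof.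
elim: Y => [|[[[[] t] a]|] Y IHY] //= /IHY IH.
by rewrite blocks_cons IH rev_cons /value_word map_rcons flatten_rcons rev_cat map_cat.
Qed.

Lemma mem_None_blocks Y : None \in blocks block_word Y -> None \in Y.
Proof.
elim: Y => [|d Y IHY] //=; rewrite blocks_cons mem_cat in_cons => /orP [|/IHY ->].
  by case: d => [[st a]|] //= /mapP [].
by rewrite orbT.
Qed.

Lemma pmap_pick_tagged st st' l : pmap (pick st) (tagged st' l) = if st' == st then l else [::].
Proof. by elim: l => [|a l IHl] /=; [case: ifP | rewrite IHl; case: ifP]. Qed.

Definition witness_left al be := tagged (false, false) al ++ tagged (false, true) be.
Definition witness_right al be := tagged (true, false) (rev al) ++ tagged (true, true) (rev be).
Definition witness al be := witness_left al be ++ None :: witness_right al be.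

Lemma on_side_witness_left al be : all (on_side false) (witness_left al be).
Proof. by rewrite all_cat !all_map; apply/andP; split; apply/allP. Qed.

Lemma on_side_witness_right al be : all (on_side true) (witness_right al be).
Proof. by rewrite all_cat !all_map; apply/andP; split; apply/allP. Qed.

Lemma witness_in_word_problem al be : word_problem gen (blocks block_word (witness al be)).
Proof.
exists (value_word (witness_left al be)), (value_word (rev (witness_right al be))); split.
  rewrite (eval_value_word (on_side_witness_left _ _)).
  rewrite (eval_value_word (s := true)) ?all_rev ?on_side_witness_right //.
  by rewrite !pmap_rev /witness_left /witness_right !pmap_cat !pmap_pick_tagged /= !cats0 !revK.
rewrite blocks_cat blocks_cons blocks_left ?on_side_witness_left //.
by rewrite blocks_right ?on_side_witness_right.
Qed.

Lemma witness_blocks_nonempty al be : geodesic genS al -> geodesic genT be ->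
  {in witness al be, forall d, 0 < size (block_word d)}.
Proof.
move=> Gal Gbe d; have eval_nil := eval_word_prod [::].
have phS_ne a : a \in al -> 0 < size (phS a).
  move=> Ha; rewrite lt0n size_eq0; apply/negP => /eqP E0.
  by apply: (geodesic_gen_neq1 Gal Ha); have := phSE a; rewrite E0 eval_nil => -[].
have phT_ne a : a \in be -> 0 < size (phT a).
  move=> Ha; rewrite lt0n size_eq0; apply/negP => /eqP E0.
  by apply: (geodesic_gen_neq1 Gbe Ha); have := phTE a; rewrite E0 eval_nil => -[].
rewrite /witness /witness_left /witness_right mem_cat in_cons !mem_cat.
case/orP => [/orP [] | /orP [/eqP -> // | /orP []]] /mapP [a Ha ->]; rewrite /= size_map ?size_rev.
- exact: phS_ne.
- exact: phT_ne.
- by apply: phS_ne; rewrite -mem_rev.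
- by apply: phT_ne; rewrite -mem_rev.
Qed.

Lemma pmap_pick_off_side s st Y : all (on_side s) Y -> st.1 != s -> pmap (pick st) Y = [::].
Proof.
move=> /allP AY Hst; apply/eqP; rewrite -size_eq0 size_pmap -(count_pred0 Y).
apply/eqP/eq_in_count => -[[st' a]|] // /AY /= /eqP Est.
by case: eqP => // Est'; move: Hst; rewrite -Est' Est eqxx.
Qed.

Lemma witness_sub_eval al be X' : subseq X' (witness al be) ->
  word_problem gen (blocks block_word X') ->
  eval_word genS (pmap (pick (false, false)) X') =
    eval_word genS (rev (pmap (pick (true, false)) X')) /\
  eval_word genT (pmap (pick (false, true)) X') =
    eval_word genT (rev (pmap (pick (true, true)) X')).
Proof.
move=> sub WP; have HN := mem_None_blocks (mem_None_word_problem WP).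
case: WP => u [v [Euv EX']].
have notin_side s (Y : seq block) : all (on_side s) Y -> None \notin Y.
  by move=> /allP AY; apply/negP => /AY.
have [Y1 [Y2 [EY S1 S2]]] := subseq_cat_cons sub HN
  (notin_side _ _ (on_side_witness_left al be)) (notin_side _ _ (on_side_witness_right al be)).
have A1 : all (on_side false) Y1.
  by apply/allP => d /(mem_subseq S1); apply/allP/on_side_witness_left.
have A2 : all (on_side true) Y2.
  by apply/allP => d /(mem_subseq S2); apply/allP/on_side_witness_right.
have notin_map (l : seq A) : None \notin map Some l by apply/mapP => -[].
have [Eu Ev] : u = value_word Y1 /\ v = value_word (rev Y2).
  move: EX'; rewrite EY blocks_cat blocks_cons blocks_left // blocks_right //.
  case/cat_cons_inj => // /(inj_map (@Some_inj _)) -> /(inj_map (@Some_inj _)).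
  by move/(can_inj revK) ->.
move: Euv; rewrite Eu Ev (eval_value_word A1) (eval_value_word (s := true)) ?all_rev // => -[ES ET].
rewrite EY !pmap_cat /= (pmap_pick_off_side (st := (true, false)) A1) //.
rewrite (pmap_pick_off_side (st := (true, true)) A1) //.
rewrite (pmap_pick_off_side (st := (false, false)) A2) //.
by rewrite (pmap_pick_off_side (st := (false, true)) A2) // !cats0 -!pmap_rev.
Qed.

Lemma size_block_seq (Y : seq block) : size Y =
  size (pmap (pick (false, false)) Y) + size (pmap (pick (false, true)) Y) +
  size (pmap (pick (true, false)) Y) + size (pmap (pick (true, true)) Y) + count_mem None Y.
Proof. by elim: Y => //= d Y ->; case: d => [[[[] []] a]|] /=; lia. Qed.

Section Rigidity.
Variables (n : nat) (al be : seq A).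
Hypotheses (Hal : size al = n) (Hbe : size be = n).
Local Notation X := (witness al be).

Lemma pmap_pick_witness :
  [/\ pmap (pick (false, false)) X = al, pmap (pick (false, true)) X = be,
      pmap (pick (true, false)) X = rev al & pmap (pick (true, true)) X = rev be].
Proof.
by rewrite /witness /witness_left /witness_right !pmap_cat /= !pmap_cat !pmap_pick_tagged /= !cats0.
Qed.

Lemma witness_zones :
  [/\ pmap (pick (false, false)) (drop n X) = [::],
      pmap (pick (false, true)) (drop (n + n) X) = [::],
      pmap (pick (true, false)) (take (n + n).+1 X) = [::]
    & pmap (pick (true, true)) (take (n + n + n).+1 X) = [::]].
Proof.
have Sl : size (witness_left al be) = n + n by rewrite size_cat !size_map Hal Hbe.
split.
- rewrite /witness /witness_left -catA drop_size_cat ?size_map //.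
  by rewrite pmap_cat /= pmap_cat !pmap_pick_tagged.
- by rewrite /witness drop_size_cat //= !pmap_cat !pmap_pick_tagged.
- rewrite /witness -cat_rcons take_size_cat ?size_rcons ?Sl //.
  by rewrite -cats1 /witness_left !pmap_cat !pmap_pick_tagged.
- rewrite /witness /witness_right -[None :: _]/((None :: _) ++ _) catA take_size_cat.
    by rewrite /witness_left !pmap_cat /= !pmap_pick_tagged.
  by rewrite size_cat Sl /= size_map size_rev Hal addnS.
Qed.

Lemma witness_subseq_eq X' : subseq X' X -> None \in X' ->
  pmap (pick (false, false)) X' = al -> pmap (pick (false, true)) X' = be ->
  size (pmap (pick (true, false)) X') = n -> size (pmap (pick (true, true)) X') = n -> X' = X.
Proof.
move=> sub; rewrite -has_pred1 has_count => None_X' Eff Eft Stf Stt.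
have SX : size X = n + n + n + n + 1.
  by rewrite /witness !size_cat /= !size_cat !size_map !size_rev Hal Hbe; lia.
have := size_block_seq X'; rewrite Eff Eft Stf Stt Hal Hbe => SX'.
have big : size X <= size X' by rewrite SX SX' leq_add2l.
by have := (size_subseq_leqif sub).2; rewrite eqn_leq size_subseq // big => /esym/eqP.
Qed.

(* The window misses one of the two copies of [al], which then forces the other copy to be
   intact by geodesicity; likewise for [be]. *)
Lemma witness_rigid k1 k2 Dm : geodesic genS al -> geodesic genT be ->
  k1 <= k2 -> k2 < k1 + n -> subseq Dm (drop k1 (take k2 X)) ->
  word_problem gen (blocks block_word (take k1 X ++ Dm ++ drop k2 X)) ->
  take k1 X ++ Dm ++ drop k2 X = X.
Proof.
move=> Gal Gbe Hk12 Hk2 HDm WP; set X' := take k1 X ++ Dm ++ drop k2 X.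
have sub : subseq X' X := subseq_window Hk12 HDm.
have [ES ET] := witness_sub_eval sub WP.
have [pff pft ptf ptt] := pmap_pick_witness.
have [zff zft ztf ztt] := witness_zones.
have [Eff Etf] : pmap (pick (false, false)) X' = al /\ rev (pmap (pick (true, false)) X') = al.
  apply: geodesic_subseq_pair Gal _ _ ES _.
  - by rewrite -pff pmap_subseq.
  - by rewrite -(revK al) subseq_rev -ptf pmap_subseq.
  have [Hn|Hn] := leqP n k1; [left | right].
  - by rewrite -pff (pmap_window_drop Hk12 HDm Hn zff).
  - by rewrite (pmap_window_take Hk12 HDm _ ztf) ?ptf ?revK //; lia.
have [Eft Ett] : pmap (pick (false, true)) X' = be /\ rev (pmap (pick (true, true)) X') = be.
  apply: geodesic_subseq_pair Gbe _ _ ET _.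
  - by rewrite -pft pmap_subseq.
  - by rewrite -(revK be) subseq_rev -ptt pmap_subseq.
  have [Hn|Hn] := leqP (n + n) k1; [left | right].
  - by rewrite -pft (pmap_window_drop Hk12 HDm Hn zft).
  - by rewrite (pmap_window_take Hk12 HDm _ ztt) ?ptt ?revK //; lia.
apply: witness_subseq_eq sub (mem_None_blocks (mem_None_word_problem WP)) Eff Eft _ _.
- by rewrite -size_rev Etf.
- by rewrite -size_rev Ett.
Qed.

End Rigidity.

Section NotContextFree.
Variable G : cfg (option A).
Hypothesis HG : forall w, word_problem gen w <-> cfg_lang G w.

Definition colour_bound := (\max_(d : block) size (block_word d)).+1.
Local Notation colour := (option block * 'I_colour_bound)%type.

Definition witness_colour (X : seq block) (p : nat) : colour :=
  let: (d, o) := block_colour block_word X p in (d, inord o).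

Lemma witness_colour_faithful X p1 p2 :
  p1 <= size (blocks block_word X) -> p2 <= size (blocks block_word X) ->
  witness_colour X p1 = witness_colour X p2 ->
  block_colour block_word X p1 = block_colour block_word X p2.
Proof.
have bound d : size (block_word d) < colour_bound by rewrite ltnS (leq_bigmax d).
move=> /block_offset_lt/(_ (ltn0Sn _) bound) o1 /block_offset_lt/(_ (ltn0Sn _) bound) o2.
rewrite /witness_colour /block_colour => -[-> /(congr1 val)] /=.
by rewrite !inordK // => ->.
Qed.

Lemma witness_not_context_free n al be :
  pumping_constant G colour < n -> size al = n -> size be = n ->
  geodesic genS al -> geodesic genT be -> False.
Proof.
move=> Hn Hal Hbe Gal Gbe; set X := witness al be.
have ne := witness_blocks_nonempty Gal Gbe.
have long : pumping_constant G colour < size (blocks block_word X).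
  apply: leq_trans Hn (leq_trans _ (size_blocks_geq ne)).
  by rewrite /X /witness !size_cat /= !size_cat !size_map; lia.
have [x [y [z [y' [q [[EW Hyy Hs C1 C2] L]]]]]] :=
  coloured_pumping (witness_colour X) (proj1 (HG _) (witness_in_word_problem al be)) long.
have [s1 s2 s3 s4] : [/\ size x <= size (blocks block_word X),
    size (x ++ y) <= size (blocks block_word X), size (x ++ y ++ z) <= size (blocks block_word X)
  & size (x ++ y ++ z ++ y') <= size (blocks block_word X)].
  by rewrite EW !size_cat; split; rewrite ?leq_add2l ?leq_addr.
have [k1 [k2 [Dm [Exzq HDm Hk12 _ Hk2]]]] := blocks_window ne EW
  (witness_colour_faithful s1 s2 C1) (witness_colour_faithful s3 s4 C2).
have WP : word_problem gen (blocks block_word (take k1 X ++ Dm ++ drop k2 X)).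
  by apply/HG; rewrite -Exzq; exact: L.
have /(witness_rigid Hal Hbe Gal Gbe Hk12) EX : k2 < k1 + n.
  by apply: leq_ltn_trans Hk2 _; rewrite ltn_add2l; apply: leq_ltn_trans Hs Hn.
move: Exzq; rewrite (EX _ HDm WP) EW => /cat_pumped_eq Eyy.
by rewrite Eyy in Hyy.
Qed.

End NotContextFree.

End ProductWitness.

Theorem mainTheorem6 (S T : monoid) :
  infinite_monoid S -> infinite_monoid T -> ~ UCF (prod_monoid S T).
Proof.
move=> HS HT [A [gen [_ [Hgen [G HG]]]]].
have [phS phSE] := functional_choice
  (fun a w => eval_word gen w = ((genS gen a, mone T) : prod_monoid S T))
  (fun a => Hgen _).
have [phT phTE] := functional_choice
  (fun a w => eval_word gen w = ((mone S, genT gen a) : prod_monoid S T))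
  (fun a => Hgen _).
set n := (pumping_constant G
  (option (option (bool * bool * A)) * 'I_(colour_bound phS phT))%type).+1.
have [al [Hal Gal]] := exists_geodesic_of_size n (generates_genS Hgen) HS.
have [be [Hbe Gbe]] := exists_geodesic_of_size n (generates_genT Hgen) HT.
by apply: (witness_not_context_free phSE phTE HG _ Hal Hbe Gal Gbe); rewrite /n.
Qed.
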